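(* Assume CH. There exists a set $A\subseteq\mathbb{R}^2$ such that every vertical slice $A_x=\{y:(x,y)\in A\}$ ($x\in\mathbb{R}$) is cocountable in $\mathbb{R}$, and $A$ is both completely $\mathcal{M}$-nonmeasurable and completely $\mathcal{N}$-nonmeasurable in $\mathbb{R}^2$.
   Context: $\mathcal{M}$ and $\mathcal{N}$ denote the $\sigma$-ideals of meager and Lebesgue-null subsets of $\mathbb{R}^2$. A set $A\subseteq\mathbb{R}^2$ is completely $\mathcal{I}$-nonmeasurable if $A$ meets every Borel set $B\notin\mathcal{I}$ and contains no Borel set $B\notin\mathcal{I}$. *)

From Stdlib Require Import Reals.
Open Scope R_scope.

Definition set (T : Type) := T -> Prop.
Definition R2 := (R * R)%type.

Definition countable {T : Type} (S : set T) : Prop :=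
  exists f : T -> nat, forall x y, S x -> S y -> f x = f y -> x = y.

(* Continuum hypothesis: every subset of R is countable or has the
   cardinality of R (R injects into it; the converse injection is inclusion). *)
Definition CH : Prop :=
  forall S : set R, countable S \/
    exists f : R -> R, (forall x, S (f x)) /\ (forall x y, f x = f y -> x = y).

Definition ball (p : R2) (r : R) : set R2 :=
  fun q => (fst q - fst p)^2 + (snd q - snd p)^2 < r^2.

Definition is_open (U : set R2) : Prop :=
  forall p, U p -> exists r, 0 < r /\ forall q, ball p r q -> U q.

Inductive borel : set R2 -> Prop :=
  | borel_open : forall U, is_open U -> borel U
  | borel_compl : forall B, borel B -> borel (fun p => ~ B p)
  | borel_union : forall F : nat -> set R2,
      (forall n, borel (F n)) -> borel (fun p => exists n, F n p).

Definition nowhere_dense (S : set R2) : Prop :=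
  forall U, is_open U -> (exists p, U p) ->
    exists V, is_open V /\ (exists p, V p) /\
      (forall p, V p -> U p) /\ (forall p, V p -> ~ S p).

Definition meager (S : set R2) : Prop :=
  exists F : nat -> set R2, (forall n, nowhere_dense (F n)) /\
    forall p, S p -> exists n, F n p.

Definition lebesgue_null (S : set R2) : Prop :=
  forall eps, 0 < eps ->
    exists a b c d : nat -> R,
      (forall n, a n <= b n /\ c n <= d n) /\
      (forall p, S p -> exists n,
          a n <= fst p <= b n /\ c n <= snd p <= d n) /\
      (forall N, sum_f_R0 (fun n => (b n - a n) * (d n - c n)) N <= eps).

Definition completely_nonmeasurable (I : set R2 -> Prop) (A : set R2) : Prop :=
  forall B, borel B -> ~ I B ->
    (exists p, B p /\ A p) /\ ~ (forall p, B p -> A p).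

(** Under CH the Borel subsets of the plane can be listed as (B_α)_{α<ω₁}, each
    coded by a real.  A Borel set that is not meager, or not null, is not covered
    by countably many vertical lines (these are both meager and null).  So by
    transfinite recursion we pick in every such B_α two points p_α, q_α whose
    abscissae avoid the countably many abscissae chosen before.  The set A of all
    points except the q_α's meets every B_α (at p_α) and omits a point of it (q_α);
    no two q_α share a vertical line, so every vertical slice of the complement of
    A has at most one point. *)

From Stdlib Require Import Reals Lra Lia ZArith List Classical ClassicalEpsilon
  FunctionalExtensionality PropExtensionality Wellfounded Cantor.
From Coquelicot Require Coquelicot.
From mathcomp Require ssreflect ssrfun ssrbool eqtype boolp wochoice.
Import ListNotations.

Lemma set_ext {T : Type} (A B : set T) : (forall x, A x <-> B x) -> A = B.
Proof.
  intro H. apply functional_extensionality. intro x.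
  apply propositional_extensionality. apply H.
Qed.

Lemma countable_preimage {T U : Type} (f : T -> U) (S : set U) :
  (forall x y, f x = f y -> x = y) -> countable S -> countable (fun x => S (f x)).
Proof. intros Hf [g Hg]. exists (fun x => g (f x)). auto. Qed.

Lemma countable_image {T U : Type} (f : T -> U) (S : set T) :
  countable S -> countable (fun y => exists x, S x /\ f x = y).
Proof.
  intros [g Hg]. destruct (classic (inhabited T)) as [inhT | Hempty].
  2: { exists (fun _ => 0%nat). intros y y' [x _]. exfalso. exact (Hempty (inhabits x)). }
  set (pre := fun y => epsilon inhT (fun x => S x /\ f x = y)).
  assert (Hpre : forall y, (exists x, S x /\ f x = y) -> S (pre y) /\ f (pre y) = y).
  { intros y Hy. exact (epsilon_spec _ _ Hy). }
  exists (fun y => g (pre y)). intros y y' Hy Hy' E.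
  destruct (Hpre y Hy) as [Sy Ey]. destruct (Hpre y' Hy') as [Sy' Ey'].
  rewrite <- Ey, <- Ey'. f_equal. auto.
Qed.

Lemma countable_union {T : Type} (A B : set T) :
  countable A -> countable B -> countable (fun x => A x \/ B x).
Proof.
  intros [f Hf] [g Hg].
  exists (fun x => if excluded_middle_informative (A x) then (2 * f x)%nat
                   else S (2 * g x)).
  intros x y Hx Hy E.
  destruct (excluded_middle_informative (A x)) as [Ax | Ax],
    (excluded_middle_informative (A y)) as [Ay | Ay].
  - apply Hf; auto. lia.
  - exfalso. lia.
  - exfalso. lia.
  - apply Hg; [destruct Hx | destruct Hy | lia]; tauto.
Qed.

Lemma countable_singleton {T : Type} (a : T) : countable (fun x => x = a).
Proof. exists (fun _ => 0%nat). intros x y -> ->. reflexivity. Qed.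

Module WellOrdering.
Import ssreflect ssrfun ssrbool eqtype boolp wochoice.

Lemma exists_well_founded_total (T : Type) :
  exists lt : T -> T -> Prop,
    well_founded lt /\ forall x y, x <> y -> lt x y \/ lt y x.
Proof.
have [le le_wo] := well_ordering_principle {classic T}.
have le_chain : wo_chain le predT by move=> A _; exact: le_wo.
have le_anti := wo_chain_antisymmetric le_chain.
pose lt x y := le x y /\ x <> y.
exists lt; split => [a|x y xy]; last first.
  by have /orP[] : le x y || le y x := wo_chainW le_chain isT isT => ?;
    [left|right]; split=> // /esym.
apply: contrapT => accNa.
have [|z [[/asboolP accNz z_min] _]] := le_wo [pred x | `[< ~ Acc lt x >]].
  by exists a; apply/asboolP.
apply: accNz; constructor => y [le_yz yz]; apply: contrapT => accNy.
by apply: yz; apply: le_anti isT isT _; rewrite le_yz z_min //; apply/asboolP.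
Qed.

End WellOrdering.

Definition wellorder_ctbl_segments {T : Type} (lt : T -> T -> Prop) : Prop :=
  well_founded lt /\ (forall x y, x <> y -> lt x y \/ lt y x) /\
  forall y, countable (fun x => lt x y).

Lemma well_founded_minimal {T : Type} (lt : T -> T -> Prop) (P : T -> Prop) :
  well_founded lt -> (exists x, P x) -> exists m, P m /\ forall y, lt y m -> ~ P y.
Proof.
  intros Hwf [x Px]. apply NNPP. intro Hno.
  induction (Hwf x) as [x _ IH]. apply Hno. exists x. split; auto.
Qed.

(* The least element whose initial segment is uncountable would give, through
   CH, an injection of R into that segment; pulling the order back along it
   makes every initial segment countable. *)
Lemma CH_wellorder_R : CH -> exists lt : R -> R -> Prop, wellorder_ctbl_segments lt.
Proof.
  intro Hch. destruct (WellOrdering.exists_well_founded_total R) as [lt [Hwf Htot]].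
  destruct (classic (forall y, countable (fun x => lt x y))) as [Hall | Hsome].
  { exists lt. split; [exact Hwf | split; [exact Htot | exact Hall]]. }
  apply not_all_ex_not in Hsome.
  destruct (well_founded_minimal lt _ Hwf Hsome) as [u [Hu Hmin]].
  destruct (Hch (fun x => lt x u)) as [Hc | [g [Hgu Hg]]]; [contradiction|].
  exists (fun x y => lt (g x) (g y)). split; [|split].
  - apply wf_inverse_image. exact Hwf.
  - intros x y Hxy. apply Htot. intro E. apply Hxy, Hg, E.
  - intro y. apply (countable_preimage g (fun z => lt z (g y)) Hg).
    apply NNPP. exact (Hmin (g y) (Hgu y)).
Qed.

Lemma wellorder_ctbl_segments_inj {T U : Type} (e : T -> U) (lt : U -> U -> Prop) :
  (forall x y, e x = e y -> x = y) -> wellorder_ctbl_segments lt ->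
  wellorder_ctbl_segments (fun x y => lt (e x) (e y)).
Proof.
  intros He [Hwf [Htot Hseg]]. split; [|split].
  - apply wf_inverse_image. exact Hwf.
  - intros x y Hxy. apply Htot. intro E. apply Hxy, He, E.
  - intro y. exact (countable_preimage e _ He (Hseg (e y))).
Qed.

Module TernaryEncoding.
Import Coquelicot.Coquelicot.
Open Scope R_scope.

Lemma ex_series_ternary_bounded (d : nat -> R) :
  (forall k, Rabs (d k) <= (/3)^k) -> ex_series d.
Proof.
  intro H. apply (ex_series_le d (fun k => (/3)^k)); [exact H|].
  apply ex_series_geom. rewrite Rabs_pos_eq; lra.
Qed.

Lemma Series_drop_zeros (d : nat -> R) n :
  (forall k, Rabs (d k) <= (/3)^k) -> (forall k, (k < n)%nat -> d k = 0) ->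
  Series d = Series (fun k => d (n + k)%nat).
Proof.
  revert d. induction n as [|n IH]; intros d Hb Hz.
  - reflexivity.
  - rewrite Series_incr_1 by (apply ex_series_ternary_bounded; exact Hb).
    rewrite (Hz 0%nat), Rplus_0_l by lia.
    apply (IH (fun k => d (S k))).
    + intro k. apply Rle_trans with ((/3)^(S k)); [apply Hb|].
      simpl. assert (0 <= (/3)^k) by (apply pow_le; lra). nra.
    + intros k Hk. apply Hz. lia.
Qed.

(* The leading term (/3)^n outweighs the whole tail, which is at most half of it. *)
Lemma Series_leading_term_neq0 (d : nat -> R) n :
  (forall k, Rabs (d k) <= (/3)^k) -> (forall k, (k < n)%nat -> d k = 0) ->
  Rabs (d n) = (/3)^n -> Series d <> 0.
Proof.
  intros Hb Hz Hn. rewrite (Series_drop_zeros d n Hb Hz).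
  set (t := fun k => (/3)^(n + S k)).
  assert (Ht : is_series t ((/3)^n * / 2)).
  { apply (is_series_ext (fun k => (/3)^n * /3 * (/3)^k)).
    { intro k. unfold t. rewrite pow_add. simpl. ring. }
    replace ((/3)^n * /2) with ((/3)^n * /3 * / (1 - /3)) by field.
    apply (is_series_scal_l _ (fun k => (/3)^k)).
    apply is_series_geom. rewrite Rabs_pos_eq; lra. }
  assert (Htail : forall k, Rabs (d (n + S k)%nat) <= t k) by (intro; apply Hb).
  assert (Hex : ex_series (fun k => d (n + k)%nat)).
  { apply ex_series_ternary_bounded. intro k. eapply Rle_trans; [apply Hb|].
    rewrite pow_add. assert (0 < (/3)^k) by (apply pow_lt; lra).
    assert ((/3)^n <= 1) by (rewrite <- (pow1 n); apply pow_incr; lra). nra. }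
  assert (Hsum : Rabs (Series (fun k => d (n + S k)%nat)) <= (/3)^n * /2).
  { rewrite <- (is_series_unique t _ Ht). eapply Rle_trans; [apply Series_Rabs|].
    - apply (@ex_series_le R_AbsRing R_CompleteNormedModule _ t).
      + intro k. unfold norm; simpl. rewrite Rabs_Rabsolu. apply Htail.
      + eexists; exact Ht.
    - apply Series_le; [|eexists; exact Ht].
      intro k. split; [apply Rabs_pos | apply Htail]. }
  rewrite Series_incr_1, Nat.add_0_r by exact Hex.
  assert (0 < (/3)^n) by (apply pow_lt; lra).
  intro E. replace (Series (fun k => d (n + S k)%nat)) with (- d n) in Hsum by lra.
  rewrite Rabs_Ropp, Hn in Hsum. lra.
Qed.

Definition indicator (P : nat -> Prop) (n : nat) : R :=
  if excluded_middle_informative (P n) then 1 else 0.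

Definition pred_to_R (P : nat -> Prop) : R :=
  Series (fun n => indicator P n * (/3)^n).

Lemma first_difference (P Q : nat -> Prop) : ~ (forall n, P n <-> Q n) ->
  exists n, ~ (P n <-> Q n) /\ forall k, (k < n)%nat -> (P k <-> Q k).
Proof.
  intro H. apply not_all_ex_not in H.
  destruct (well_founded_minimal lt _ Wf_nat.lt_wf H) as [n [Hn Hmin]].
  exists n. split; [exact Hn|]. intros k Hk. apply NNPP, Hmin, Hk.
Qed.

Lemma indicator_cases (P : nat -> Prop) k :
  (P k /\ indicator P k = 1) \/ (~ P k /\ indicator P k = 0).
Proof. unfold indicator. destruct (excluded_middle_informative (P k)); auto. Qed.

Lemma pred_to_R_inj (P Q : nat -> Prop) :
  pred_to_R P = pred_to_R Q -> forall n, P n <-> Q n.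
Proof.
  intro E. apply NNPP. intro H. destruct (first_difference P Q H) as [n [Hn Hk]].
  set (d := fun k => indicator P k * (/3)^k - indicator Q k * (/3)^k).
  assert (Hpos : forall k, 0 < (/3)^k) by (intro; apply pow_lt; lra).
  assert (Hbit : forall R k, Rabs (indicator R k * (/3)^k) <= (/3)^k).
  { intros R k. specialize (Hpos k).
    destruct (indicator_cases R k) as [[_ ->] | [_ ->]]; apply Rabs_le; lra. }
  apply (Series_leading_term_neq0 d n).
  - intro k. specialize (Hpos k). unfold d.
    destruct (indicator_cases P k) as [[_ ->] | [_ ->]],
      (indicator_cases Q k) as [[_ ->] | [_ ->]]; apply Rabs_le; lra.
  - intros k Hlt. specialize (Hk k Hlt). unfold d.
    destruct (indicator_cases P k) as [[? ->] | [? ->]],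
      (indicator_cases Q k) as [[? ->] | [? ->]]; try ring; tauto.
  - specialize (Hpos n). unfold d.
    destruct (indicator_cases P n) as [[? ->] | [? ->]],
      (indicator_cases Q n) as [[? ->] | [? ->]]; try tauto.
    + rewrite Rabs_pos_eq; lra.
    + rewrite Rabs_left; lra.
  - unfold d. rewrite Series_minus; [unfold pred_to_R in E; lra | |];
      apply ex_series_ternary_bounded, Hbit.
Qed.

End TernaryEncoding.
Import TernaryEncoding.

Inductive code : Type :=
| Cbox (v : nat -> nat)
| Ccompl (c : code)
| Cunion (f : nat -> code).

(* A code as a labelled tree: the root label records the constructor, and a
   path [i :: l] descends into the [i]-th child (or reads [v i] at a leaf). *)
Fixpoint code_tree (c : code) (l : list nat) : nat :=
  match c, l with
  | Cbox _, nil => 0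
  | Cbox v, i :: _ => v i
  | Ccompl _, nil => 1
  | Ccompl c', _ :: l' => code_tree c' l'
  | Cunion _, nil => 2
  | Cunion f, i :: l' => code_tree (f i) l'
  end.

Lemma code_tree_inj c c' : code_tree c = code_tree c' -> c = c'.
Proof.
  revert c'. induction c as [v | c IH | f IH]; intros c' E; destruct c' as [w | d | g];
    try (pose proof (f_equal (fun t => t nil) E); discriminate).
  - f_equal. apply functional_extensionality. intro i. exact (f_equal (fun t => t [i]) E).
  - f_equal. apply IH. apply functional_extensionality. intro l.
    exact (f_equal (fun t => t (0%nat :: l)) E).
  - f_equal. apply functional_extensionality. intro i. apply IH.
    apply functional_extensionality. intro l. exact (f_equal (fun t => t (i :: l)) E).
Qed.

Fixpoint list_to_nat (l : list nat) : nat :=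
  match l with nil => 0 | x :: l' => S (to_nat (x, list_to_nat l')) end.

Lemma to_nat_inj p q : to_nat p = to_nat q -> p = q.
Proof. intro E. rewrite <- (cancel_of_to p), <- (cancel_of_to q), E. reflexivity. Qed.

Lemma list_to_nat_inj l l' : list_to_nat l = list_to_nat l' -> l = l'.
Proof.
  revert l'. induction l as [|x l IH]; intros [|y l'] E; cbn [list_to_nat] in E;
    try discriminate; [reflexivity|].
  apply eq_add_S, to_nat_inj in E. injection E as -> E. f_equal. auto.
Qed.

Definition graph_pred (t : list nat -> nat) (k : nat) : Prop :=
  exists l, k = to_nat (list_to_nat l, t l).

Lemma graph_pred_inj t t' : (forall k, graph_pred t k <-> graph_pred t' k) -> t = t'.
Proof.
  intro H. apply functional_extensionality. intro l.
  destruct (proj1 (H (to_nat (list_to_nat l, t l))) (ex_intro _ l eq_refl)) as [l' E].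
  apply to_nat_inj in E. injection E as E1 E2. apply list_to_nat_inj in E1.
  subst. auto.
Qed.

Definition code_to_R (c : code) : R := pred_to_R (graph_pred (code_tree c)).

Lemma code_to_R_inj c c' : code_to_R c = code_to_R c' -> c = c'.
Proof. intro E. apply code_tree_inj, graph_pred_inj, pred_to_R_inj, E. Qed.

(* [Cbox v] is the open square of half-side [v 5 * 2^-(v 0)] centred at the
   dyadic point [((v 1 - v 2) 2^-(v 0), (v 3 - v 4) 2^-(v 0))]; it is empty
   when [v 5 = 0]. *)
Definition dyadic_box (v : nat -> nat) : set R2 :=
  fun q => let h := (/2)^(v 0%nat) in
    Rabs (fst q - (INR (v 1%nat) - INR (v 2%nat)) * h) < INR (v 5%nat) * h /\
    Rabs (snd q - (INR (v 3%nat) - INR (v 4%nat)) * h) < INR (v 5%nat) * h.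

Fixpoint interp (c : code) : set R2 :=
  match c with
  | Cbox v => dyadic_box v
  | Ccompl c' => fun p => ~ interp c' p
  | Cunion f => fun p => exists n, interp (f n) p
  end.

Definition box_params (k a1 a2 b1 b2 m : nat) : nat -> nat :=
  fun i => nth i [k; a1; a2; b1; b2; m] 0%nat.

(* The union of the dyadic squares of half-side [2 * 2^-k] contained in [U]; the
   other squares are replaced by empty ones. *)
Definition open_code (U : set R2) : code :=
  Cunion (fun k => Cunion (fun a1 => Cunion (fun a2 => Cunion (fun b1 =>
    Cunion (fun b2 => Cbox (box_params k a1 a2 b1 b2
      (if excluded_middle_informative
            (forall q, dyadic_box (box_params k a1 a2 b1 b2 2) q -> U q)
       then 2 else 0))))))).

Lemma dyadic_approx (x h : R) : 0 < h ->
  exists a1 a2 : nat, Rabs (x - (INR a1 - INR a2) * h) < h.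
Proof.
  intro Hh. destruct (archimed (x / h)) as [H1 H2].
  set (z := (up (x / h) - 1)%Z).
  exists (Z.to_nat z), (Z.to_nat (- z)).
  replace (INR (Z.to_nat z) - INR (Z.to_nat (- z))) with (IZR z)
    by (rewrite !INR_IZR_INZ, <- minus_IZR; f_equal; lia).
  unfold z. rewrite minus_IZR.
  assert (E : x = (x / h) * h) by (field; lra).
  apply Rabs_def1; rewrite E at 1; nra.
Qed.

Lemma Rabs_lt_sqr u t : Rabs u < t -> u ^ 2 < t ^ 2.
Proof.
  intro H. assert (0 <= Rabs u) by apply Rabs_pos.
  rewrite <- (pow2_abs u). nra.
Qed.

(* A point [p] of [U] with a ball of radius [r] inside [U] lies in a dyadic square
   of half-side [2h], [h < r/5], centred within [h] of [p] in each coordinate; the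
   square then lies within [3h] of [p] coordinatewise, hence inside the ball. *)
Lemma interp_open_code U : is_open U -> interp (open_code U) = U.
Proof.
  intro HU. apply set_ext. intro p. split.
  - intros [k [a1 [a2 [b1 [b2 Hp]]]]]. cbn [interp] in Hp.
    destruct (excluded_middle_informative _) as [Hsub | _]; [exact (Hsub p Hp)|].
    destruct Hp as [Hp _]. simpl in Hp. rewrite Rmult_0_l in Hp.
    exfalso. exact (Rlt_irrefl 0 (Rle_lt_trans _ _ _ (Rabs_pos _) Hp)).
  - intro Hp. destruct (HU p Hp) as [r [Hr Hball]].
    destruct (pow_lt_1_zero (/2) ltac:(rewrite Rabs_pos_eq; lra) (r/5) ltac:(lra))
      as [k Hk].
    specialize (Hk k (le_n k)). rewrite Rabs_pos_eq in Hk by (apply pow_le; lra).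
    set (h := (/2)^k) in *. assert (Hh : 0 < h) by (apply pow_lt; lra).
    destruct (dyadic_approx (fst p) h Hh) as [a1 [a2 Ha]].
    destruct (dyadic_approx (snd p) h Hh) as [b1 [b2 Hb]].
    exists k, a1, a2, b1, b2. cbn [interp].
    destruct (excluded_middle_informative _) as [_ | Hnot].
    + unfold dyadic_box, box_params. simpl. fold h. split; lra.
    + exfalso. apply Hnot. intros q [Hq1 Hq2]. apply Hball.
      unfold box_params in Hq1, Hq2. simpl in Hq1, Hq2. fold h in Hq1, Hq2.
      assert (Htri : forall x y c, Rabs (x - y) <= Rabs (x - c) + Rabs (y - c)).
      { intros x y c. rewrite <- (Rabs_Ropp (y - c)).
        replace (x - y) with ((x - c) + - (y - c)) by ring. apply Rabs_triang. }
      assert (Hx : Rabs (fst q - fst p) < 3 * h)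
        by (eapply Rle_lt_trans; [apply (Htri _ _ ((INR a1 - INR a2) * h)) | lra]).
      assert (Hy : Rabs (snd q - snd p) < 3 * h)
        by (eapply Rle_lt_trans; [apply (Htri _ _ ((INR b1 - INR b2) * h)) | lra]).
      apply Rabs_lt_sqr in Hx. apply Rabs_lt_sqr in Hy. unfold ball. nra.
Qed.

Lemma borel_coded B : borel B -> exists c, interp c = B.
Proof.
  induction 1 as [U HU | B _ [c <-] | F _ IH].
  - exists (open_code U). exact (interp_open_code U HU).
  - exists (Ccompl c). reflexivity.
  - destruct (choice (fun n c => interp c = F n) IH) as [g Hg].
    exists (Cunion g). apply set_ext. intro p.
    split; intros [n Hn]; exists n; [rewrite <- Hg | rewrite Hg]; exact Hn.
Qed.

Lemma nowhere_dense_vertical (S : set R2) :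
  (forall s s', S s -> S s' -> fst s = fst s') -> nowhere_dense S.
Proof.
  intros HS U HU [p Hp].
  destruct (classic (exists s, S s)) as [[s0 Hs0] | Hno].
  2: { exists U. split; [exact HU | split; [eauto | split; [auto | eauto]]]. }
  set (x0 := fst s0).
  exists (fun q => U q /\ fst q <> x0). split; [|split; [|split]].
  - intros q [Uq Hq]. destruct (HU q Uq) as [r1 [Hr1 Hball]].
    assert (Hd : 0 < Rabs (fst q - x0)) by (apply Rabs_pos_lt; lra).
    set (m := Rmin r1 (Rabs (fst q - x0))).
    assert (Hm1 : m <= r1) by apply Rmin_l.
    assert (Hm2 : m <= Rabs (fst q - x0)) by apply Rmin_r.
    assert (Hm : 0 < m) by (apply Rmin_pos; lra).
    exists m. split; [exact Hm|]. intros q' Hq'. unfold ball in Hq'.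
    assert (0 <= (snd q' - snd q)^2) by apply pow2_ge_0.
    split.
    + apply Hball. unfold ball. nra.
    + intro E. rewrite E in Hq'.
      assert ((x0 - fst q)^2 = Rabs (fst q - x0) ^ 2) by (rewrite pow2_abs; ring). nra.
  - destruct (HU p Hp) as [r [Hr Hball]].
    destruct (Req_dec (fst p) x0) as [E | E].
    + exists (fst p + r / 2, snd p). split; [apply Hball; unfold ball; simpl; nra|].
      simpl. lra.
    + exists p. auto.
  - intros q [Uq _]. exact Uq.
  - intros q [_ Hq] Sq. apply Hq, HS; auto.
Qed.

Lemma meager_vertical_lines (C : set R) : countable C -> meager (fun p => C (fst p)).
Proof.
  intros [f Hf]. exists (fun n p => C (fst p) /\ f (fst p) = n). split.
  - intro n. apply nowhere_dense_vertical. intros s s' [H1 H2] [H3 H4].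
    apply Hf; congruence.
  - intros p Hp. exists (f (fst p)). auto.
Qed.

Lemma nat_upper_bound y : exists m, y <= INR m.
Proof.
  destruct (archimed y) as [H1 _]. exists (Z.to_nat (up y)). rewrite INR_IZR_INZ.
  destruct (Z_le_gt_dec 0 (up y)) as [H | H].
  - rewrite Z2Nat.id by exact H. lra.
  - assert (IZR (up y) < 0) by (apply IZR_lt; lia).
    replace (Z.to_nat (up y)) with 0%nat by lia. simpl. lra.
Qed.

Lemma sum_f_R0_zero (g : nat -> R) : (forall n, g n = 0) -> forall N, sum_f_R0 g N = 0.
Proof.
  intros H N. induction N as [|N IH]; simpl; rewrite H; [reflexivity|]. rewrite IH. ring.
Qed.

(* Degenerate rectangles suffice: the segments {x} x [-m, m], for x in C and
   m in nat, cover the lines over C and have total area 0. *)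
Lemma null_vertical_lines (C : set R) : countable C -> lebesgue_null (fun p => C (fst p)).
Proof.
  intros [f Hf] eps Heps.
  set (xx := fun n => epsilon (inhabits 0) (fun x => C x /\ f x = n)).
  set (a := fun k => xx (fst (of_nat k))).
  set (d := fun k => INR (snd (of_nat k))).
  exists a, a, (fun k => - d k), d. split; [|split].
  - intro n. assert (0 <= d n) by apply pos_INR. split; lra.
  - intros p Hp. destruct (nat_upper_bound (Rabs (snd p))) as [m Hm].
    exists (to_nat (f (fst p), m)). unfold a, d. rewrite cancel_of_to. simpl.
    assert (E : xx (f (fst p)) = fst p).
    { assert (H : C (xx (f (fst p))) /\ f (xx (f (fst p))) = f (fst p))
        by (apply epsilon_spec; exists (fst p); auto).
      apply Hf; tauto. }
    rewrite E. unfold Rabs in Hm. destruct (Rcase_abs (snd p)); repeat split; lra.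
  - intro N. rewrite sum_f_R0_zero; [lra|]. intro n. ring.
Qed.

Lemma meager_sub (S S' : set R2) : meager S -> (forall p, S' p -> S p) -> meager S'.
Proof. intros [F [HF HS]] H. exists F. auto. Qed.

Lemma lebesgue_null_sub (S S' : set R2) :
  lebesgue_null S -> (forall p, S' p -> S p) -> lebesgue_null S'.
Proof.
  intros HS H eps Heps. destruct (HS eps Heps) as [a [b [c [d [H1 [H2 H3]]]]]].
  exists a, b, c, d. auto.
Qed.

Definition nonnegligible (S : set R2) : Prop := ~ meager S \/ ~ lebesgue_null S.

Lemma nonnegligible_escapes_vertical_lines (S : set R2) (C : set R) :
  nonnegligible S -> countable C -> exists p, S p /\ ~ C (fst p).
Proof.
  intros HS HC. apply NNPP. intro Hno.
  assert (Hsub : forall p, S p -> C (fst p)).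
  { intros p Hp. apply NNPP. intro H. apply Hno. eauto. }
  destruct HS as [HS | HS]; apply HS.
  - exact (meager_sub _ S (meager_vertical_lines C HC) Hsub).
  - exact (lebesgue_null_sub _ S (null_vertical_lines C HC) Hsub).
Qed.

Section TransfiniteSelection.

Variables (I X K : Type) (key : X -> K) (lt : I -> I -> Prop).
Hypothesis lt_wo : wellorder_ctbl_segments lt.
Variables (good : I -> Prop) (S : I -> set X).
Hypothesis X_inhabited : inhabited X.
Hypothesis S_escapes : forall i, good i ->
  forall C : set K, countable C -> exists x, S i x /\ ~ C (key x).

Definition used_keys (i : I) (sel : forall j, lt j i -> X * X) : set K :=
  fun k => exists j (h : lt j i), key (fst (sel j h)) = k \/ key (snd (sel j h)) = k.

Definition select_step (i : I) (sel : forall j, lt j i -> X * X) : X * X :=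
  let C := used_keys i sel in
  let p := epsilon X_inhabited (fun p => S i p /\ ~ C (key p)) in
  (p, epsilon X_inhabited (fun q => S i q /\ ~ C (key q) /\ key q <> key p)).

Definition select : I -> X * X := Fix (proj1 lt_wo) (fun _ => (X * X)%type) select_step.

Lemma select_eq i : select i = select_step i (fun j _ => select j).
Proof.
  unfold select. apply (Fix_eq (proj1 lt_wo) (fun _ => (X * X)%type) select_step).
  intros x f g H. f_equal.
  apply functional_extensionality_dep. intro y.
  apply functional_extensionality_dep. apply H.
Qed.

Definition earlier_keys (i : I) : set K :=
  fun k => (exists j, lt j i /\ key (fst (select j)) = k) \/
           (exists j, lt j i /\ key (snd (select j)) = k).

Lemma countable_earlier_keys i : countable (earlier_keys i).
Proof.
  destruct lt_wo as [_ [_ Hseg]].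
  apply countable_union; apply countable_image, Hseg.
Qed.

Lemma select_spec i : good i ->
  let p := fst (select i) in let q := snd (select i) in
  S i p /\ S i q /\ ~ earlier_keys i (key p) /\ ~ earlier_keys i (key q) /\ key q <> key p.
Proof.
  intro Hi. rewrite select_eq. unfold select_step. cbn zeta.
  replace (used_keys i (fun j _ => select j)) with (earlier_keys i).
  2: { apply set_ext. intro k. unfold earlier_keys, used_keys.
       split.
       - intros [[j [h E]] | [j [h E]]]; exists j, h; [left | right]; exact E.
       - intros [j [h [E | E]]]; [left | right]; exists j; split; assumption. }
  set (C := earlier_keys i).
  set (p := epsilon X_inhabited (fun p => S i p /\ ~ C (key p))).
  assert (Hp : S i p /\ ~ C (key p)).
  { apply epsilon_spec, S_escapes, countable_earlier_keys. exact Hi. }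
  assert (Hq : exists q, S i q /\ ~ C (key q) /\ key q <> key p).
  { destruct (S_escapes i Hi (fun k => C k \/ k = key p)) as [q [Sq Hq]].
    - apply countable_union; [apply countable_earlier_keys | apply countable_singleton].
    - exists q. tauto. }
  apply (epsilon_spec X_inhabited) in Hq. tauto.
Qed.

Lemma select_later_avoids i j : good j -> lt i j ->
  forall x, x = fst (select i) \/ x = snd (select i) ->
  key (fst (select j)) <> key x /\ key (snd (select j)) <> key x.
Proof.
  intros Hj Hij x Hx. destruct (select_spec j Hj) as [_ [_ [Npj [Nqj _]]]].
  assert (Hearly : earlier_keys j (key x)).
  { destruct Hx as [-> | ->]; [left | right]; eauto. }
  split; intro E; [apply Npj | apply Nqj]; rewrite E; exact Hearly.
Qed.

Lemma transfinite_selection : exists p q : I -> X, forall i, good i ->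
  S i (p i) /\ S i (q i) /\
  forall j, good j -> key (p i) <> key (q j) /\ (key (q i) = key (q j) -> i = j).
Proof.
  exists (fun i => fst (select i)), (fun i => snd (select i)).
  intros i Hi. destruct (select_spec i Hi) as [Spi [Sqi [_ [_ Hqp]]]].
  split; [exact Spi|]. split; [exact Sqi|]. intros j Hj.
  destruct (classic (i = j)) as [<- | Hij].
  { split; [exact (not_eq_sym Hqp) | reflexivity]. }
  destruct (proj1 (proj2 lt_wo) i j Hij) as [Hlt | Hlt]; split; intro E; try exfalso.
  - apply (proj2 (select_later_avoids i j Hj Hlt (fst (select i)) (or_introl eq_refl))).
    symmetry. exact E.
  - apply (proj2 (select_later_avoids i j Hj Hlt (snd (select i)) (or_intror eq_refl))).
    symmetry. exact E.
  - apply (proj1 (select_later_avoids j i Hi Hlt (snd (select j)) (or_intror eq_refl))).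
    exact E.
  - apply (proj2 (select_later_avoids j i Hi Hlt (snd (select j)) (or_intror eq_refl))).
    exact E.
Qed.

End TransfiniteSelection.

Theorem mainTheorem5 :
  CH ->
  exists A : set R2,
    (forall x : R, countable (fun y : R => ~ A (x, y))) /\
    completely_nonmeasurable meager A /\
    completely_nonmeasurable lebesgue_null A.
Proof.
  intro Hch. destruct (CH_wellorder_R Hch) as [ltR HR].
  destruct (transfinite_selection code R2 R fst _
              (wellorder_ctbl_segments_inj code_to_R ltR code_to_R_inj HR)
              (fun c => nonnegligible (interp c)) interp (inhabits (0, 0)%R)
              (fun c Hc C HC => nonnegligible_escapes_vertical_lines _ C Hc HC))
    as [p [q Hpq]].
  set (A := fun z => ~ exists c, nonnegligible (interp c) /\ q c = z).
  assert (HA : forall B, borel B -> nonnegligible B ->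
                 (exists z, B z /\ A z) /\ ~ (forall z, B z -> A z)).
  { intros B HB HBn. destruct (borel_coded B HB) as [c <-].
    destruct (Hpq c HBn) as [Hp [Hq Hkeys]]. split.
    - exists (p c). split; [exact Hp|]. intros [d [Hd E]].
      apply (proj1 (Hkeys d Hd)). rewrite E. reflexivity.
    - intro Hsub. apply (Hsub (q c) Hq). eauto. }
  exists A. split; [|split].
  - intro x. exists (fun _ => 0%nat).
    intros y y' [c [Hc Ec]]%NNPP [c' [Hc' Ec']]%NNPP _.
    destruct (Hpq c Hc) as [_ [_ Hkeys]].
    assert (c = c') as <- by (apply (Hkeys c' Hc'); rewrite Ec, Ec'; reflexivity).
    rewrite Ec in Ec'. injection Ec'. auto.
  - intros B HB HBn. apply HA; [exact HB | left; exact HBn].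
  - intros B HB HBn. apply HA; [exact HB | right; exact HBn].
Qed.
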